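(* Let $\alpha>0$ be an ordinal and let $\mathcal{X}\in\mathfrak{C}_\alpha$. Then there is a countable collection $\{\mathcal{Y}_m\}_{m=1}^\infty$ of families of metric spaces such that for every $R\in\mathbb{R}^{\mathbb{N}}$ there is an $n$ with $\mathcal{X}\xrightarrow{R}\mathcal{Y}_n$ and $\mathcal{Y}_n\in\mathfrak{C}_\beta$ for some $\beta<\alpha$.
   Context: A family $\mathcal{U}$ of metric subspaces of a metric space $(X,d)$ is $r$-disjoint if $d(x,y)>r$ whenever $x\in U$, $y\in U'$, $U\neq U'$ in $\mathcal{U}$. For families $\mathcal{X},\mathcal{Y}$ and $R\in\mathbb{R}^{\mathbb{N}}$, $\mathcal{X}\xrightarrow{R}\mathcal{Y}$ means: there is an integer $k$ such that for each $X\in\mathcal{X}$ there are subcollections $\mathcal{U}_1,\dots,\mathcal{U}_k\subseteq\mathcal{Y}$ of subspaces of $X$, each $\mathcal{U}_i$ being $R_i$-disjoint, with $\bigcup_i\mathcal{U}_i$ covering $X$. A family is bounded if the diameters of its members are uniformly bounded. $\mathfrak{C}_0$ is the class of bounded families; for an ordinal $\alpha>0$, $\mathfrak{C}_\alpha$ is the class of families $\mathcal{X}$ such that for every $R\in\mathbb{R}^{\mathbb{N}}$ there exist $\beta<\alpha$ and $\mathcal{Y}\in\mathfrak{C}_\beta$ with $\mathcal{X}\xrightarrow{R}\mathcal{Y}$. *)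

From Stdlib Require Import Reals.
Open Scope R_scope.

Definition is_metric {M : Type} (d : M -> M -> R) : Prop :=
  (forall x y, 0 <= d x y) /\
  (forall x y, d x y = 0 <-> x = y) /\
  (forall x y, d x y = d y x) /\
  (forall x y z, d x z <= d x y + d y z).

(* Metric subspaces of (M,d) are subsets of M with the induced metric;
   a family is a collection of such subspaces. *)
Definition msubspace (M : Type) := M -> Prop.
Definition mfamily (M : Type) := msubspace M -> Prop.

Definition r_disjoint {M : Type} (d : M -> M -> R) (r : R) (U : mfamily M) : Prop :=
  forall A B : msubspace M, U A -> U B -> A <> B ->
  forall x y, A x -> B y -> d x y > r.

Definition bounded_family {M : Type} (d : M -> M -> R) (F : mfamily M) : Prop :=
  exists D : R, forall A, F A -> forall x y, A x -> A y -> d x y <= D.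

(* X --R--> Y, with R : nat -> R (indices i = 1..k used). *)
Definition decomposes {M : Type} (d : M -> M -> R)
    (X : mfamily M) (Rs : nat -> R) (Y : mfamily M) : Prop :=
  exists k : nat, forall A, X A ->
    exists U : nat -> mfamily M,
      (forall i, (1 <= i <= k)%nat ->
         (forall B, U i B -> Y B /\ (forall x, B x -> A x)) /\
         r_disjoint d (Rs i) (U i)) /\
      (forall x, A x -> exists i, (1 <= i <= k)%nat /\ exists B, U i B /\ B x).

(* Ordinals are modelled by elements of an arbitrary well-ordered type (O, lt). *)
Inductive Cls {M : Type} (d : M -> M -> R) {O : Type} (lt : O -> O -> Prop)
  : O -> mfamily M -> Prop :=
| C_zero : forall a F, (forall b, ~ lt b a) -> bounded_family d F -> Cls d lt a F
| C_succ : forall a F, (exists b, lt b a) ->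
    (forall Rs : nat -> R, exists b Y, lt b a /\ Cls d lt b Y /\ decomposes d F Rs Y) ->
    Cls d lt a F.

Definition well_order {O : Type} (lt : O -> O -> Prop) : Prop :=
  well_founded lt /\
  (forall a b c, lt a b -> lt b c -> lt a c) /\
  (forall a b, lt a b \/ a = b \/ lt b a).

From Stdlib Require Import Reals ZArith Lra Lia List ClassicalEpsilon.
From mathcomp Require choice.
Open Scope R_scope.

(* Enlarging the radii only strengthens a decomposition, so the radii [R] may
   be rounded up to natural numbers.  A decomposition with natural radii is
   then described by a finite sequence of naturals (one radius per colour),
   which is coded by a single natural number [n]; choosing, for each code [n],
   one family [Ys n] of lower class realising it gives the countable
   collection. *)

Definition nat_above (r : R) : nat := Z.abs_nat (up r).

Lemma nat_above_ge (r : R) : r <= INR (nat_above r).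
Proof.
  unfold nat_above.
  rewrite INR_IZR_INZ, Nat2Z.inj_abs_nat.
  destruct (archimed r) as [r_lt_up _].
  assert (IZR (up r) <= IZR (Z.abs (up r))) by (apply IZR_le; lia).
  lra.
Qed.

Lemma r_disjoint_mono {M : Type} (d : M -> M -> R) (r r' : R) (U : mfamily M) :
  r' <= r -> r_disjoint d r U -> r_disjoint d r' U.
Proof.
  intros r'_le_r U_disj A B UA UB A_ne_B x y Ax By.
  specialize (U_disj A B UA UB A_ne_B x y Ax By).
  lra.
Qed.

Definition decomposes_in {M : Type} (d : M -> M -> R) (k : nat)
    (X : mfamily M) (Rs : nat -> R) (Y : mfamily M) : Prop :=
  forall A, X A ->
    exists U : nat -> mfamily M,
      (forall i, (1 <= i <= k)%nat ->
         (forall B, U i B -> Y B /\ (forall x, B x -> A x)) /\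
         r_disjoint d (Rs i) (U i)) /\
      (forall x, A x -> exists i, (1 <= i <= k)%nat /\ exists B, U i B /\ B x).

Lemma decomposes_in_mono {M : Type} (d : M -> M -> R) (k : nat)
    (X Y : mfamily M) (Rs Rs' : nat -> R) :
  (forall i, (1 <= i <= k)%nat -> Rs' i <= Rs i) ->
  decomposes_in d k X Rs Y -> decomposes_in d k X Rs' Y.
Proof.
  intros Rs'_le_Rs X_dec A XA.
  destruct (X_dec A XA) as [U [U_colours U_cover]].
  exists U; split; [|exact U_cover].
  intros i i_range.
  destruct (U_colours i i_range) as [U_in_Y U_disj].
  split; [exact U_in_Y|].
  exact (r_disjoint_mono d _ _ _ (Rs'_le_Rs i i_range) U_disj).
Qed.

Lemma Cls_decomposes {M : Type} (d : M -> M -> R) {O : Type}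
    (lt : O -> O -> Prop) (alpha : O) (X : mfamily M) :
  (exists b, lt b alpha) -> Cls d lt alpha X ->
  forall Rs : nat -> R,
    exists beta Y, lt beta alpha /\ Cls d lt beta Y /\ decomposes d X Rs Y.
Proof.
  intros [b b_lt_alpha] X_cls.
  destruct X_cls as [alpha X alpha_min _ | alpha X _ X_dec].
  - exfalso; exact (alpha_min b b_lt_alpha).
  - exact X_dec.
Qed.

(* A code [n] stands for the [k] radii listed in the sequence [decode n] of
   length [k]; radius [i] (for [1 <= i <= k]) is its entry at index [i - 1]. *)
Definition code_colours (n : nat) : nat := length (choice.CodeSeq.decode n).

Definition code_radius (n i : nat) : R :=
  INR (nth (pred i) (choice.CodeSeq.decode n) 0%nat).

Lemma code_radius_exists (f : nat -> nat) (k : nat) :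
  exists n, code_colours n = k /\
    forall i, (1 <= i <= k)%nat -> code_radius n i = INR (f i).
Proof.
  set (s := map (fun j => f (S j)) (seq 0 k)).
  exists (choice.CodeSeq.code s).
  unfold code_colours, code_radius; split; [|intros i i_range];
    rewrite choice.CodeSeq.codeK; unfold s.
  { rewrite length_map, length_seq; reflexivity. }
  f_equal.
  rewrite nth_indep with (d' := f 1%nat) by (rewrite length_map, length_seq; lia).
  rewrite (map_nth (fun j => f (S j)) _ 0%nat), seq_nth by lia.
  f_equal; lia.
Qed.

Section LowerClassChoice.

Variables (M : Type) (d : M -> M -> R) (O : Type) (lt : O -> O -> Prop).
Variables (alpha : O) (X : mfamily M).

Definition realises_code (n : nat) (Y : mfamily M) : Prop :=
  exists beta, lt beta alpha /\ Cls d lt beta Y /\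
    decomposes_in d (code_colours n) X (code_radius n) Y.

Definition chosen_family (n : nat) : mfamily M :=
  epsilon (inhabits (fun _ => False)) (realises_code n).

Lemma chosen_family_realises (n : nat) (Y : mfamily M) :
  realises_code n Y -> realises_code n (chosen_family n).
Proof.
  intro Y_realises.
  exact (epsilon_spec _ (realises_code n) (ex_intro _ Y Y_realises)).
Qed.

End LowerClassChoice.

Theorem lemma3p6 (M : Type) (d : M -> M -> R) (hd : is_metric d)
  (O : Type) (lt : O -> O -> Prop) (hwo : well_order lt)
  (alpha : O) (halpha : exists b, lt b alpha)
  (X : mfamily M) (hX : Cls d lt alpha X) :
  exists Ys : nat -> mfamily M,
    forall Rs : nat -> R, exists n : nat,
      decomposes d X Rs (Ys n) /\
      exists beta, lt beta alpha /\ Cls d lt beta (Ys n).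
Proof.
  exists (chosen_family M d O lt alpha X).
  intro Rs.
  set (f i := nat_above (Rs i)).
  destruct (Cls_decomposes d lt alpha X halpha hX (fun i => INR (f i)))
    as [beta [Y [beta_lt_alpha [Y_cls [k X_dec]]]]].
  destruct (code_radius_exists f k) as [n [n_colours n_radius]].
  assert (Y_realises : realises_code M d O lt alpha X n Y).
  { exists beta; repeat split; try assumption.
    rewrite n_colours.
    apply (decomposes_in_mono d k X Y _ _ (fun i i_range => Req_le _ _ (n_radius i i_range))).
    exact X_dec. }
  destruct (chosen_family_realises M d O lt alpha X n Y Y_realises)
    as [gamma [gamma_lt_alpha [chosen_cls chosen_dec]]].
  exists n; split; [|exists gamma; split; assumption].
  exists (code_colours n).
  apply (decomposes_in_mono d _ X _ (code_radius n) Rs); [|exact chosen_dec].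
  intros i i_range; rewrite n_radius by lia.
  apply nat_above_ge.
Qed.
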